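(* Consider a firm selling a single product in bundle sizes $i\in N=\{1,\dots,n\}$ to customer types $j\in M$. Suppose that for every $j\in M$, $d_{ij}(p)$ is (weakly) increasing in $p_k$ for all $k\ne i$, and $\sum_{i\in N}i\,d_{ij}(p)$ is (weakly) decreasing in each component of $p$. Let $f\in\mathbb{R}^n$ with $f_i=i$. Then $$\bar{\mathcal{R}}\le\beta\,\mathcal{R}^f\le\beta\,\mathcal{R}^*,\qquad \beta=1+\ln(q_{\max}/q_{\min}),$$ where $\mathcal{R}^*$ is the profit from the optimal non-personalized non-linear pricing policy and $\mathcal{R}^f$ is the optimal profit under the non-personalized linear pricing policy $p_i=iq$.
   Context: $p_i$ is the price of a size-$i$ bundle, $p=(p_1,\dots,p_n)$, and $d_{ij}(p)\ge0$ is the demand for size-$i$ bundles from customer type $j\in M=\{1,\dots,m\}$; type weights $\theta_j>0$, $\sum_j\theta_j=1$. $R_j(p)=\sum_ip_id_{ij}(p)$, $\mathcal{R}^*_j=\max_{p\ge0}R_j(p)$, $\bar{\mathcal{R}}=\sum_j\theta_j\mathcal{R}^*_j$ (optimal personalized non-linear pricing profit), $R(p)=\sum_j\theta_jR_j(p)$, $\mathcal{R}^*=\max_{p\ge0}R(p)$, $\mathcal{R}^f=\max_{q>0}R(qf)$. Standing assumption (A0): for each $j$, $R_j$ attains its maximum over $p\ge 0$ at a price vector $\bar p^j$ with positive finite components $\bar p_{ij}$. $q_{\min}=\min_{i,j}\bar p_{ij}/f_i=\min_{i,j}\bar p_{ij}/i$ and $q_{\max}=\max_{i,j}\bar p_{ij}/i$.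 *)

From HB Require Import structures.
From mathcomp Require Import all_boot all_order all_algebra.
From mathcomp Require Import all_classical all_reals all_analysis.
Set Implicit Arguments. Unset Strict Implicit. Unset Printing Implicit Defensive.
Import Order.TTheory GRing.Theory Num.Theory.
Local Open Scope ring_scope.
Local Open Scope classical_set_scope.

(* Bundle sizes N = {1,...,n} are indexed by i : 'I_n, where index i stands
   for the bundle of size i+1.  Customer types M = {1,...,m} by 'I_m.
   A price vector is a function p : 'I_n -> R. *)

Definition bsize {R : realType} {n : nat} (i : 'I_n) : R := (i.+1)%:R.

Definition nonneg_price {R : realType} {n : nat} (p : 'I_n -> R) : Prop :=
  forall i, 0 <= p i.

Definition rev_j {R : realType} {n m : nat}
  (d : 'I_n -> 'I_m -> ('I_n -> R) -> R) (j : 'I_m) (p : 'I_n -> R) : R :=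
  \sum_(i < n) p i * d i j p.

Definition rev_tot {R : realType} {n m : nat} (theta : 'I_m -> R)
  (d : 'I_n -> 'I_m -> ('I_n -> R) -> R) (p : 'I_n -> R) : R :=
  \sum_(j < m) theta j * rev_j d j p.

Definition lin_price {R : realType} {n : nat} (q : R) : 'I_n -> R :=
  fun i => q * bsize i.

Definition Rstar {R : realType} {n m : nat} (theta : 'I_m -> R)
  (d : 'I_n -> 'I_m -> ('I_n -> R) -> R) : R :=
  sup [set x | exists2 p : 'I_n -> R, nonneg_price p & x = rev_tot theta d p].

Definition Rlin {R : realType} {n m : nat} (theta : 'I_m -> R)
  (d : 'I_n -> 'I_m -> ('I_n -> R) -> R) : R :=
  sup [set x | exists2 q : R, 0 < q & x = rev_tot theta d (lin_price q)].

Definition cross_increasing {R : realType} {n m : nat}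
  (d : 'I_n -> 'I_m -> ('I_n -> R) -> R) (j : 'I_m) : Prop :=
  forall (i k : 'I_n) (p p' : 'I_n -> R),
    k != i -> nonneg_price p -> nonneg_price p' ->
    (forall l, l != k -> p l = p' l) -> p k <= p' k ->
    d i j p <= d i j p'.

Definition units_decreasing {R : realType} {n m : nat}
  (d : 'I_n -> 'I_m -> ('I_n -> R) -> R) (j : 'I_m) : Prop :=
  forall (k : 'I_n) (p p' : 'I_n -> R),
    nonneg_price p -> nonneg_price p' ->
    (forall l, l != k -> p l = p' l) -> p k <= p' k ->
    \sum_(i < n) bsize i * d i j p' <= \sum_(i < n) bsize i * d i j p.

From HB Require Import structures.
From mathcomp Require Import all_boot all_order all_algebra.
From mathcomp Require Import all_classical all_reals all_analysis.
From mathcomp Require Import ring lra.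
Set Implicit Arguments.
Unset Strict Implicit.
Unset Printing Implicit Defensive.
Import Order.TTheory GRing.Theory Num.Theory.
Local Open Scope ring_scope.

(* Let [v] be the unit prices [pbar_ji / i] and [w] the theta-weighted numbers
   of units sold at [pbar_j].  The monotonicity of demand gives
   [t * sum_(v >= t) w <= R(t f) <= R^f] for every [t > 0], while
   [Rbar = sum v w = int_0^oo sum_(v >= t) w dt].  Splitting the integral at
   [q_min] bounds it by [q_min sum w + int_(q_min)^(q_max) R^f / t dt], that is
   by [R^f (1 + ln (q_max / q_min))].  The integral is replaced by an induction
   over the sorted unit prices. *)

Lemma ln_ge_1_subV (R : realType) (x : R) : 0 < x -> 1 - x^-1 <= ln x.
Proof.
move=> x0; have := @le_ln1Dx R (x^-1 - 1).
rewrite addrCA subrr addr0 lnV ?posrE // ltrBrDr addNr invr_gt0 => /(_ x0); lra.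
Qed.

Lemma ler_lower_threshold (R : realType) (b c V W F : R) :
  0 < c -> c <= b -> 0 < V -> 0 <= F -> b * W <= F ->
  b * W + F * ln (V / b) <= c * W + F * ln (V / c).
Proof.
move=> c0 cb V0 F0 bWF; have b0 : 0 < b by apply: lt_le_trans cb.
have lnE : ln (V / c) = ln (V / b) + ln (b / c).
  by rewrite -lnM ?posrE ?divr_gt0 // mulrA divfK ?gt_eqF.
have shift_ge0 : 0 <= 1 - c / b by rewrite subr_ge0 ler_pdivrMr // mul1r.
have : (1 - c / b) * (b * W) <= (1 - c / b) * F by apply: ler_wpM2l.
have : (1 - c / b) * F <= ln (b / c) * F.
  by apply: ler_wpM2r => //; rewrite -[c / b]invf_div ln_ge_1_subV ?divr_gt0.
have -> : (1 - c / b) * (b * W) = b * W - c * W by field; rewrite gt_eqF.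
rewrite lnE; lra.
Qed.

Section LayerCake.
Variables (R : realType) (T : eqType) (v w : T -> R) (F : R).
Hypothesis w_ge0 : forall a, 0 <= w a.

(* The least value [v x], at the head, is the lower threshold for the tail. *)
Lemma sorted_sum_mul_le (s : seq T) :
  sorted (fun a b => v a <= v b) s ->
  (forall t, 0 < t -> t * \sum_(a <- s | t <= v a) w a <= F) ->
  forall c V, 0 < c -> c <= V -> (forall a, a \in s -> c <= v a <= V) ->
  \sum_(a <- s) v a * w a <= c * \sum_(a <- s) w a + F * ln (V / c).
Proof.
have F_ge0 s' : (forall t, 0 < t -> t * \sum_(a <- s' | t <= v a) w a <= F) -> 0 <= F.
  by move=> /(_ 1 ltr01); apply: le_trans; rewrite mul1r sumr_ge0.
elim: s => [|x s IH] sorted_s hF c V c0 cV v_in.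
  by rewrite !big_nil mulr0 add0r mulr_ge0 ?(F_ge0 [::]) ?ln_ge0 ?ler_pdivlMr ?mul1r.
have [cx xV] := andP (v_in x (mem_head _ _)).
have x_min : all (fun b => v x <= v b) s.
  by apply: order_path_min sorted_s => a b e; apply: le_trans.
have hF_tail t : 0 < t -> t * \sum_(a <- s | t <= v a) w a <= F.
  move=> t0; apply: le_trans (hF t t0); apply: ler_wpM2l; first exact: ltW.
  by rewrite big_cons; case: ifP; rewrite ?lerDr.
have hF_head : v x * \sum_(a <- x :: s) w a <= F.
  have tail_above : \sum_(a <- s | v x <= v a) w a = \sum_(a <- s) w a.
    rewrite big_seq_cond [RHS]big_seq; apply: eq_bigl => a.
    by case: (boolP (a \in s)) => //= /(allP x_min).
  by have := hF (v x) (lt_le_trans c0 cx); rewrite !big_cons lexx tail_above.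
have IHx := IH (path_sorted sorted_s) hF_tail _ _ (lt_le_trans c0 cx) xV.
apply: le_trans _ (ler_lower_threshold c0 cx (lt_le_trans c0 cV) (F_ge0 _ hF) hF_head).
rewrite !big_cons mulrDr -addrA lerD2l; apply: IHx => a ha.
by rewrite (allP x_min) //= (andP (v_in a _)).2 // in_cons ha orbT.
Qed.

End LayerCake.

Lemma sum_mul_le_layer_cake (R : realType) (T : finType) (v w : T -> R) (F c V : R) :
  (forall a, 0 <= w a) ->
  (forall t, 0 < t -> t * \sum_(a | t <= v a) w a <= F) ->
  0 < c -> c <= V -> (forall a, c <= v a <= V) ->
  \sum_a v a * w a <= (1 + ln (V / c)) * F.
Proof.
move=> w_ge0 hF c0 cV v_in.
pose s := sort (fun a b => v a <= v b) (index_enum T).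
have perm_s : perm_eq s (index_enum T) by rewrite perm_sort.
have sorted_s : sorted (fun a b => v a <= v b) s.
  by apply: sort_sorted => a b; apply: le_total.
have hF_s t : 0 < t -> t * \sum_(a <- s | t <= v a) w a <= F.
  by rewrite (perm_big _ perm_s); apply: hF.
have := sorted_sum_mul_le w_ge0 sorted_s hF_s c0 cV (fun a _ => v_in a).
rewrite !(perm_big _ perm_s) mulrDl mul1r [ln _ * F]mulrC.
move=> /le_trans; apply; rewrite lerD2r.
have all_above : \sum_(a | c <= v a) w a = \sum_a w a.
  by apply: eq_bigl => a; rewrite (andP (v_in a)).1.
by have := hF c c0; rewrite all_above.
Qed.

Lemma le_by_coordinate_raises (R : realType) (n : nat) (G : ('I_n -> R) -> R)
    (p p' : 'I_n -> R) :
  nonneg_price p -> nonneg_price p' -> (forall l, p l <= p' l) ->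
  (forall k x y, nonneg_price x -> nonneg_price y ->
     (forall l, l != k -> x l = y l) -> x k <= y k -> p k != p' k -> G x <= G y) ->
  G p <= G p'.
Proof.
move=> p_ge0 p'_ge0 le_pp' G_raise.
pose r t : 'I_n -> R := fun l => if (l < t)%N then p' l else p l.
have r_ge0 t : nonneg_price (r t) by move=> l; rewrite /r; case: ifP.
have r_le t : (t <= n)%N -> G p <= G (r t).
  elim: t => [|t IH] ht; first by have -> : r 0%N = p by apply: funext.
  apply: le_trans (IH (ltnW ht)) _; pose k := Ordinal ht.
  have r_off l : l != k -> r t l = r t.+1 l.
    move=> /negbTE lk; rewrite /r [(l < t.+1)%N]ltnS [(l <= t)%N]leq_eqVlt.
    by rewrite (lk : (l : nat) == t = false).
  have [pk_eq|pk_neq] := eqVneq (p k) (p' k).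
    have -> : r t.+1 = r t.
      apply: funext => l; have [->|lk] := eqVneq l k; last by rewrite r_off.
      by rewrite /r ltnn ltnSn.
    exact: lexx.
  by apply: (G_raise k) => //; rewrite /r ltnn ltnSn.
have -> : p' = r n by apply: funext => l; rewrite /r ltn_ord.
exact: r_le.
Qed.

Lemma bsize_gt0 (R : realType) (n : nat) (i : 'I_n) : 0 < bsize i :> R.
Proof. exact: ltr0Sn. Qed.

Lemma lin_price_ge0 (R : realType) (n : nat) (q : R) :
  0 <= q -> nonneg_price (lin_price (n := n) q).
Proof. by move=> q_ge0 i; rewrite /lin_price mulr_ge0 // ltW ?bsize_gt0. Qed.

Lemma rev_j_lin_price (R : realType) (n m : nat)
    (d : 'I_n -> 'I_m -> ('I_n -> R) -> R) (j : 'I_m) (q : R) :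
  rev_j d j (lin_price q) = q * \sum_(i < n) bsize i * d i j (lin_price q).
Proof. by rewrite /rev_j mulr_sumr; apply: eq_bigr => i _; rewrite mulrA. Qed.

Section LinearPriceUnits.
Variables (R : realType) (n m : nat) (d : 'I_n -> 'I_m -> ('I_n -> R) -> R) (j : 'I_m).
Hypotheses (d_ge0 : forall i p, nonneg_price p -> 0 <= d i j p)
  (d_cross : cross_increasing d j) (d_units : units_decreasing d j).

(* Go through the prices [max pbar (q f)]: raising the other prices from
   [pbar] only increases the demand for a bundle whose unit price is at least
   [q], and lowering them to [q f] only increases the number of units sold. *)
Lemma units_above_le_lin_price (pbar : 'I_n -> R) (q : R) :
  nonneg_price pbar -> 0 <= q ->
  \sum_(i < n | q <= pbar i / bsize i) bsize i * d i j pbar <=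
  \sum_(i < n) bsize i * d i j (lin_price q).
Proof.
move=> pbar_ge0 q_ge0.
pose ph i := Num.max (pbar i) (lin_price q i).
have ph_ge0 : nonneg_price ph by move=> i; rewrite le_max pbar_ge0.
have lin_ge0 := lin_price_ge0 (n := n) q_ge0.
have ph_above i : q <= pbar i / bsize i -> ph i = pbar i.
  by rewrite ler_pdivlMr ?bsize_gt0 // => le_q; rewrite /ph max_l.
have demand_up i : q <= pbar i / bsize i -> d i j pbar <= d i j ph.
  move=> /ph_above ph_i; apply: le_by_coordinate_raises => //.
  - by move=> l; rewrite le_max lexx.
  - move=> k x y x_ge0 y_ge0 xy le_xy ne; apply: d_cross xy le_xy => //.
    by apply: contra ne => /eqP ->; rewrite ph_i.
have units_down :
    \sum_(i < n) bsize i * d i j ph <= \sum_(i < n) bsize i * d i j (lin_price q).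
  rewrite -lerN2.
  apply: (le_by_coordinate_raises (G := fun x => - \sum_(i < n) bsize i * d i j x)).
  - exact: lin_ge0.
  - exact: ph_ge0.
  - by move=> l; rewrite le_max lexx orbT.
  - by move=> k x y x_ge0 y_ge0 xy le_xy _; rewrite lerN2; apply: (d_units x_ge0 y_ge0 xy le_xy).
apply: le_trans units_down; rewrite [X in _ <= X](bigID (fun i => q <= pbar i / bsize i)) /=.
apply: ler_wpDr; first by apply: sumr_ge0 => i _; rewrite mulr_ge0 ?d_ge0 // ltW ?bsize_gt0.
by apply: ler_sum => i /demand_up; apply: ler_wpM2l; rewrite ltW ?bsize_gt0.
Qed.

End LinearPriceUnits.

Section UnitPrices.
Variables (R : realType) (n m : nat) (theta : 'I_m -> R).
Variables (d : 'I_n -> 'I_m -> ('I_n -> R) -> R) (pbar : 'I_m -> 'I_n -> R).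

Definition unit_price (a : 'I_m * 'I_n) : R := pbar a.1 a.2 / bsize a.2.

Definition weighted_units (a : 'I_m * 'I_n) : R :=
  theta a.1 * (bsize a.2 * d a.2 a.1 (pbar a.1)).

Lemma sum_rev_j_unit_prices :
  \sum_(j < m) theta j * rev_j d j (pbar j) =
  \sum_a unit_price a * weighted_units a.
Proof.
under eq_bigr => j _ do rewrite /rev_j mulr_sumr.
rewrite pair_big; apply: eq_bigr => -[j i] _.
by rewrite /unit_price /weighted_units /=; field; rewrite gt_eqF ?bsize_gt0.
Qed.

Hypotheses (theta_ge0 : forall j, 0 <= theta j)
  (d_ge0 : forall i j p, nonneg_price p -> 0 <= d i j p)
  (pbar_ge0 : forall j, nonneg_price (pbar j)).

Lemma weighted_units_ge0 (a : 'I_m * 'I_n) : 0 <= weighted_units a.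
Proof. by rewrite mulr_ge0 ?mulr_ge0 ?d_ge0 // ltW ?bsize_gt0. Qed.

Hypotheses (d_cross : forall j, cross_increasing d j)
  (d_units : forall j, units_decreasing d j).

Lemma units_above_le_rev_tot (t : R) : 0 < t ->
  t * \sum_(a | t <= unit_price a) weighted_units a <= rev_tot theta d (lin_price t).
Proof.
move=> t_gt0.
have -> : \sum_(a | t <= unit_price a) weighted_units a =
    \sum_(j < m) theta j * \sum_(i < n | t <= pbar j i / bsize i) bsize i * d i j (pbar j).
  under [RHS]eq_bigr => j _ do rewrite mulr_sumr.
  by rewrite pair_big_dep; apply: eq_big => -[j i].
rewrite mulr_sumr; apply: ler_sum => j _; rewrite rev_j_lin_price mulrCA.
apply: ler_wpM2l => //; apply: ler_wpM2l; first exact: ltW.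
apply: (units_above_le_lin_price (fun i => d_ge0 i j) (d_cross j) (d_units j)) => //.
exact: ltW.
Qed.

End UnitPrices.

Section Suprema.
Variables (R : realType) (n m : nat) (theta : 'I_m -> R).
Variables (d : 'I_n -> 'I_m -> ('I_n -> R) -> R) (B : R).
Hypothesis rev_tot_le : forall p, nonneg_price p -> rev_tot theta d p <= B.

Lemma rev_tot_lin_price_le_Rlin (t : R) : 0 < t -> rev_tot theta d (lin_price t) <= Rlin theta d.
Proof.
move=> t_gt0; rewrite /Rlin; apply: sup_upper_bound; last by exists t.
split; first by exists (rev_tot theta d (lin_price 1)); exists 1.
by exists B => _ [q q_gt0 ->]; apply/rev_tot_le/lin_price_ge0/ltW.
Qed.

Lemma Rlin_le_Rstar : Rlin theta d <= Rstar theta d.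
Proof.
rewrite /Rlin /Rstar; apply: ge_sup; first by exists (rev_tot theta d (lin_price 1)); exists 1.
move=> _ [q q_gt0 ->]; apply: sup_upper_bound; last first.
  by exists (lin_price q) => //; apply/lin_price_ge0/ltW.
split; first by exists (rev_tot theta d (lin_price 1)), (lin_price 1) => //; apply: lin_price_ge0.
by exists B => _ [p p_ge0 ->]; apply: rev_tot_le.
Qed.

End Suprema.

Theorem corollary4 (R : realType) (n m : nat)
  (theta : 'I_m -> R) (d : 'I_n -> 'I_m -> ('I_n -> R) -> R)
  (pbar : 'I_m -> 'I_n -> R) (qmin qmax : R) :
  (forall j, 0 < theta j) ->
  \sum_(j < m) theta j = 1 ->
  (forall i j p, nonneg_price p -> 0 <= d i j p) ->
  (* (A0): R_j is maximized over p >= 0 at pbar j, with positive finite entries *)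
  (forall j i, 0 < pbar j i) ->
  (forall j p, nonneg_price p -> rev_j d j p <= rev_j d j (pbar j)) ->
  (* demand monotonicity assumptions *)
  (forall j, cross_increasing d j) ->
  (forall j, units_decreasing d j) ->
  (* q_min = min_{i,j} pbar_ij / i, q_max = max_{i,j} pbar_ij / i *)
  (exists i j, qmin = pbar j i / bsize i) ->
  (forall i j, qmin <= pbar j i / bsize i) ->
  (exists i j, qmax = pbar j i / bsize i) ->
  (forall i j, pbar j i / bsize i <= qmax) ->
  let beta := 1 + ln (qmax / qmin) in
  let Rbar := \sum_(j < m) theta j * rev_j d j (pbar j) in
  Rbar <= beta * Rlin theta d /\ beta * Rlin theta d <= beta * Rstar theta d.
Proof.
move=> theta_gt0 _ d_ge0 pbar_gt0 pbar_opt d_cross d_units [i0 [j0 qminE]] qmin_le _ le_qmax.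
move=> beta Rbar.
have theta_ge0 j : 0 <= theta j by apply: ltW.
have pbar_ge0 j : nonneg_price (pbar j) by move=> i; apply: ltW.
have rev_tot_le p : nonneg_price p -> rev_tot theta d p <= Rbar.
  by move=> p_ge0; apply: ler_sum => j _; rewrite ler_wpM2l ?pbar_opt.
have qmin_gt0 : 0 < qmin by rewrite qminE divr_gt0 ?bsize_gt0.
have qmin_le_qmax : qmin <= qmax := le_trans (qmin_le i0 j0) (le_qmax i0 j0).
split.
- rewrite /Rbar sum_rev_j_unit_prices; apply: sum_mul_le_layer_cake => //.
  + exact: weighted_units_ge0.
  + move=> t t_gt0; apply: le_trans (rev_tot_lin_price_le_Rlin rev_tot_le t_gt0).
    exact: units_above_le_rev_tot.
  + by move=> [j i]; rewrite /unit_price qmin_le le_qmax.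
- apply: ler_wpM2l (Rlin_le_Rstar rev_tot_le).
  by rewrite addr_ge0 ?ln_ge0 // ler_pdivlMr // mul1r.
Qed.
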